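(* For any $s\in\mathbb R$ and any $a,b\ge0$, $$\lim_{n\to\infty}\Biggl(\sum_{i=0}^n\binom ni^sa^ib^{n-i}\Biggr)^{1/n}=\begin{cases}(a^{1/s}+b^{1/s})^s&\text{if }s>0,\\ \max\{a,b\}&\text{if }s\le0.\end{cases}$$
   Context: The convention $0^0=1$ is used in the terms $a^ib^{n-i}$. *)

From HB Require Import structures.
From mathcomp Require Import all_boot all_order all_algebra.
From mathcomp Require Import all_classical all_reals all_analysis.
Set Implicit Arguments. Unset Strict Implicit. Unset Printing Implicit Defensive.
Import Order.TTheory GRing.Theory Num.Theory.
Local Open Scope ring_scope.

(* S_n(s,a,b) = \sum_{i=0}^n C(n,i)^s a^i b^(n-i); a^+0 = 1 encodes 0^0 = 1. *)
Definition binom_pow_sum (R : realType) (s a b : R) (n : nat) : R :=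
  \sum_(i < n.+1) (('C(n, i))%:R `^ s) * a ^+ i * b ^+ (n - i).

Definition binom_pow_limit (R : realType) (s a b : R) : R :=
  if 0 < s then (a `^ (s^-1) + b `^ (s^-1)) `^ s else Num.max a b.

From HB Require Import structures.
From mathcomp Require Import all_boot all_order all_algebra.
From mathcomp Require Import all_classical all_reals all_analysis.
From mathcomp Require Import ring lra.
Set Implicit Arguments.
Unset Strict Implicit.
Unset Printing Implicit Defensive.
Import Order.TTheory GRing.Theory Num.Theory.
Local Open Scope ring_scope.
Import numFieldNormedType.Exports.
Local Open Scope classical_set_scope.

(* S_n is squeezed between (n+1)^(-k) L^n, for a constant k, and (n+1) L^n,
   where L is the claimed limit; since (n+1)^(c/n) -> 1, the n-th roots of S_n
   tend to L.
   For s <= 0 every weight C(n,i)^s lies in (0,1], so S_n is at most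
   (n+1) max(a,b)^n and at least its endpoint term max(a,b)^n.
   For s > 0, S_n = sum_i t_i^s with t_i = C(n,i) x^i y^(n-i), x = a^(1/s),
   y = b^(1/s), and sum_i t_i = (x+y)^n by the binomial theorem; the largest t_i
   lies between the mean and the sum of the t_i, which bounds sum_i t_i^s. *)

Section BinomPowSum.
Variable R : realType.
Implicit Types (s x y : R) (n : nat).

Lemma powR_exprn x y n : 0 <= x -> (x ^+ n) `^ y = (x `^ y) ^+ n.
Proof. by move=> x0; rewrite -!powR_mulrn ?powR_ge0 // powRAC. Qed.

Lemma exprn_powR_root x n : 0 <= x -> (0 < n)%N -> (x ^+ n) `^ n%:R^-1 = x.
Proof.
by move=> x0 n0; rewrite -powR_mulrn // -powRrM mulfV ?powRr1 // pnatr_eq0 -lt0n.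
Qed.

Lemma powR_root_exprn x s n : 0 < s -> 0 <= x -> ((x `^ s^-1) ^+ n) `^ s = x ^+ n.
Proof.
by move=> s0 x0; rewrite powR_exprn ?powR_ge0 // -powRrM mulVf ?gt_eqF ?powRr1.
Qed.

Lemma ln_le_twice_sqrt x : 0 < x -> ln x <= 2 * Num.sqrt x.
Proof.
move=> x0; have r0 : 0 < Num.sqrt x by rewrite sqrtr_gt0.
have -> : ln x = 2 * ln (Num.sqrt x) by rewrite mulr_natl -lnXn // sqr_sqrtr ?ltW.
by rewrite ler_wpM2l // ltW // ln_sublinear.
Qed.

Lemma cvg_ln_natS_div : (fun n => n%:R^-1 * ln (n.+1%:R : R)) @ \oo --> 0.
Proof.
apply: (@squeeze_cvgr _ _ _ _ (fun=> 0) (fun n => 4 * Num.sqrt (harmonic n))).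
- near=> n.
  have n1 : 1 <= (n%:R : R) by rewrite ler1n; near: n; exact: nbhs_infty_ge.
  have n0 : 0 < (n%:R : R) by rewrite (lt_le_trans ltr01).
  rewrite mulr_ge0 ?invr_ge0 ?ler0n ?ln_ge0 ?ler1n //=.
  set r := Num.sqrt (n.+1%:R : R).
  have r0 : 0 < r by rewrite sqrtr_gt0.
  have rr : r * r = n%:R + 1 by rewrite -expr2 sqr_sqrtr // -natr1.
  have lnr : ln (n.+1%:R : R) <= 2 * r by apply: ln_le_twice_sqrt; rewrite ltr0n.
  rewrite sqrtrV // -/r; apply: le_trans (ler_wpM2l _ lnr) _; first by rewrite invr_ge0 ltW.
  (* n^-1 * 2 r <= 4 / r  <=>  2 (n + 1) <= 4 n *)
  rewrite ler_pdivlMr // -mulrA -mulrA rr mulrC ler_pdivrMr //.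
  lra.
- exact: cvg_cst.
- rewrite -(mulr0 4) -sqrtr0; apply: cvgMl_tmp.
  exact: (continuous_cvg _ (@sqrt_continuous R 0)) cvg_harmonic.
Unshelve. all: end_near. Qed.

Lemma cvg_natS_powR_div x : (fun n => (n.+1%:R : R) `^ (x / n%:R)) @ \oo --> (1 : R).
Proof.
have -> : (fun n => (n.+1%:R : R) `^ (x / n%:R)) =
    expR \o (fun n => x * (n%:R^-1 * ln (n.+1%:R : R))).
  by apply/funext => n /=; rewrite /powR pnatr_eq0 mulrA.
rewrite -[X in _ --> X]expR0; apply: (continuous_cvg _ (@continuous_expR R 0)).
by rewrite -[X in _ --> X](mulr0 x); apply: cvgMl_tmp; exact: cvg_ln_natS_div.
Qed.

Lemma cvg_root_squeeze (T : nat -> R) (L k : R) : 0 <= L ->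
    (forall n, n.+1%:R `^ (- k) * L ^+ n <= T n <= n.+1%:R * L ^+ n) ->
  (fun n => T n `^ n%:R^-1) @ \oo --> L.
Proof.
move=> L0 T_bounds.
have root_scaled (c : R) n : 0 <= c -> (0 < n)%N ->
    (c * L ^+ n) `^ n%:R^-1 = L * c `^ n%:R^-1.
  by move=> c0 n0; rewrite powRM ?exprn_ge0 // exprn_powR_root // mulrC.
apply: (@squeeze_cvgr _ _ _ _ (fun n => L * n.+1%:R `^ (- k / n%:R))
                              (fun n => L * n.+1%:R `^ (1 / n%:R))); last first.
- by rewrite -[X in _ --> X]mulr1; apply: cvgMl_tmp; exact: cvg_natS_powR_div.
- by rewrite -[X in _ --> X]mulr1; apply: cvgMl_tmp; exact: cvg_natS_powR_div.
near=> n.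
have n0 : (0 < n)%N by near: n; exact: nbhs_infty_gt.
have /andP[lo hi] := T_bounds n.
have lo0 : 0 <= n.+1%:R `^ (- k) * L ^+ n by rewrite mulr_ge0 ?powR_ge0 ?exprn_ge0.
have root_le y z : 0 <= y -> y <= z -> y `^ n%:R^-1 <= z `^ n%:R^-1.
  move=> y0 yz; have z0 := le_trans y0 yz.
  by apply: ge0_ler_powR; rewrite ?nnegrE ?invr_ge0.
apply/andP; split.
- by rewrite powRrM -root_scaled ?powR_ge0 //; exact: root_le lo0 lo.
- by rewrite div1r -root_scaled //; exact: root_le (le_trans lo0 lo) hi.
Unshelve. all: end_near. Qed.

Lemma ler_sum_term (I : finType) (F : I -> R) j :
  (forall i, 0 <= F i) -> F j <= \sum_i F i.
Proof. by move=> F0; rewrite (bigD1 j) //= lerDl sumr_ge0. Qed.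

Lemma exists_mean_le (I : finType) (F : I -> R) : (0 < #|I|)%N ->
  exists j, (\sum_i F i) / #|I|%:R <= F j.
Proof.
move=> /card_gt0P[j0 _]; apply/existsP; apply: contraT.
rewrite negb_exists => /forallP F_lt_mean.
have : \sum_i F i < \sum_(i : I) (\sum_i F i) / #|I|%:R.
  by apply: ltr_sum => [|i _]; [apply/hasP; exists j0 | rewrite ltNge F_lt_mean].
have I0 : (#|I|%:R : R) != 0 by rewrite pnatr_eq0 -lt0n; apply/card_gt0P; exists j0.
rewrite sumr_const; change #|xpredT| with #|I|.
by rewrite -[X in _ < X]mulr_natr divfK ?ltxx.
Qed.

Lemma sum_powR_bounds (I : finType) (t : I -> R) s : (0 < #|I|)%N -> 0 <= s ->
    (forall i, 0 <= t i) ->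
  #|I|%:R `^ (- s) * (\sum_i t i) `^ s <= \sum_i t i `^ s <= #|I|%:R * (\sum_i t i) `^ s.
Proof.
move=> I0 s0 t0; have S0 : 0 <= \sum_i t i by exact: sumr_ge0.
have powR_le x y : 0 <= x -> x <= y -> x `^ s <= y `^ s.
  move=> x0 xy; have y0 := le_trans x0 xy.
  by apply: ge0_ler_powR; rewrite ?nnegrE.
apply/andP; split.
- have [j mean_le] := exists_mean_le t I0.
  apply: le_trans (ler_sum_term j (fun i => powR_ge0 _ _)).
  apply: le_trans (powR_le _ _ _ mean_le); last by rewrite divr_ge0.
  by rewrite mulrC powRM ?invr_ge0 // -powR_inv1 // -powRrM mulN1r.
- apply: le_trans (_ : _ <= \sum_(i : I) (\sum_i t i) `^ s) _.
    by apply: ler_sum => i _; apply: powR_le; [exact: t0 | exact: ler_sum_term].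
  by rewrite sumr_const mulr_natl.
Qed.

Lemma binom_pow_sum_bounds_le0 s a b n : s <= 0 -> 0 <= a -> 0 <= b ->
  Num.max a b ^+ n <= binom_pow_sum s a b n <= n.+1%:R * Num.max a b ^+ n.
Proof.
move=> s0 a0 b0; rewrite /binom_pow_sum; set L := Num.max a b.
have term_ge0 (i : 'I_n.+1) : 0 <= 'C(n, i)%:R `^ s * a ^+ i * b ^+ (n - i).
  by rewrite !mulr_ge0 ?powR_ge0 ?exprn_ge0.
apply/andP; split.
- have [ab|ba] := leP a b.
  + rewrite /L max_r //; apply: (le_trans _ (ler_sum_term ord0 term_ge0)).
    by rewrite /= bin0 powR1 subn0 !mul1r.
  + rewrite /L (max_l (ltW ba)); apply: (le_trans _ (ler_sum_term ord_max term_ge0)).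
    by rewrite /= binn powR1 subnn mulr1 mul1r.
- apply: le_trans (_ : _ <= \sum_(i < n.+1) L ^+ n) _; last first.
    by rewrite sumr_const card_ord mulr_natl.
  apply: ler_sum => i _; have le_in : (i <= n)%N by rewrite -ltnS.
  have -> : L ^+ n = 1 * L ^+ i * L ^+ (n - i) by rewrite mul1r -exprD subnKC.
  have binom_le1 : 'C(n, i)%:R `^ s <= 1.
    by rewrite -[leRHS](powRr0 'C(n, i)%:R); apply: ler_powR s0; rewrite ler1n bin_gt0.
  have aL : a <= L by rewrite le_max lexx.
  have bL : b <= L by rewrite le_max lexx orbT.
  have L0 : 0 <= L := le_trans a0 aL.
  apply: ler_pM; rewrite ?mulr_ge0 ?powR_ge0 ?exprn_ge0 ?lerXn2r ?nnegrE //.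
  by apply: ler_pM; rewrite ?powR_ge0 ?exprn_ge0 ?lerXn2r ?nnegrE.
Qed.

Lemma binom_pow_sum_bounds_gt0 s a b n : 0 < s -> 0 <= a -> 0 <= b ->
  n.+1%:R `^ (- s) * ((a `^ s^-1 + b `^ s^-1) `^ s) ^+ n <= binom_pow_sum s a b n
    <= n.+1%:R * ((a `^ s^-1 + b `^ s^-1) `^ s) ^+ n.
Proof.
move=> s0 a0 b0; rewrite /binom_pow_sum.
set x := a `^ s^-1; set y := b `^ s^-1.
set t := fun i : 'I_n.+1 => 'C(n, i)%:R * x ^+ i * y ^+ (n - i).
have t0 i : 0 <= t i by rewrite /t !mulr_ge0 ?exprn_ge0 ?powR_ge0.
have sum_t : \sum_i t i = (x + y) ^+ n.
  by rewrite addrC exprDn; apply: eq_bigr => i _; rewrite /t -mulr_natl /=; ring.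
have -> : \sum_(i < n.+1) 'C(n, i)%:R `^ s * a ^+ i * b ^+ (n - i) = \sum_i t i `^ s.
  apply: eq_bigr => i _.
  by rewrite /t !powRM ?mulr_ge0 ?exprn_ge0 ?powR_ge0 ?ler0n // !powR_root_exprn.
rewrite -powR_exprn ?addr_ge0 ?powR_ge0 // -sum_t -[in X in X%:R](card_ord n.+1).
by apply: sum_powR_bounds; rewrite ?card_ord ?ltW.
Qed.

End BinomPowSum.

Theorem lemmaA4 (R : realType) (s a b : R) (ha : 0 <= a) (hb : 0 <= b) :
  (fun n : nat => binom_pow_sum s a b n `^ (n%:R^-1)) @ \oo --> binom_pow_limit s a b.
Proof.
rewrite /binom_pow_limit; case: ifPn => [s_gt0 | s_le0].
- apply: (cvg_root_squeeze (k := s)); first by rewrite powR_ge0.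
  by move=> n; exact: binom_pow_sum_bounds_gt0.
- rewrite -leNgt in s_le0.
  apply: (cvg_root_squeeze (k := 0)); first by rewrite le_max ha.
  by move=> n; rewrite oppr0 powRr0 mul1r; exact: binom_pow_sum_bounds_le0.
Qed.
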